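(* Let $G$ be an ordered graph with $|V(G)|\le n$, let $h\ge 1$ be a real number, and let $e\in E(G)$ satisfy $\mathrm{h}_G(e)\ge 21h\log n$. Then there is a subgraph $H\subseteq G$ with average degree $\overline{d}(H)\ge h$ such that for each $f\in E(H)$ there is an increasing trail $T$ in $G$ with the following properties: (1) $T$ starts with $e$ and ends with $f$; (2) $T$ has length at most $2+\log n$; (3) $\mathrm{h}_G(g)\ge \mathrm{h}_G(e)-7h(\log n+2)$ for every edge $g\in E(T)$.
   Context: An ordered graph is a finite simple graph $G$ equipped with a total order $\le_G$ on $E(G)$ and a total order $\le^V_G$ on $V(G)$. Let $\mathbb N=\{1,2,\dots\}$. Define $\preceq_{\mathrm{lex}}$ on $\mathbb N\times V(G)$ by $(i,v)\preceq_{\mathrm{lex}}(i',v')$ iff $i<i'$, or $i=i'$ and $v\le^V_G v'$. The height table $\mathrm{HT}(G)$ is a partially filled array indexed by $\mathbb N\times V(G)$, built by going through all $(i,v)$ in $\preceq_{\mathrm{lex}}$-increasing order and setting the entry at $(i,v)$ to be the $\le_G$-largest edge containing $v$ not yet entered into the table (blank if none remain). Every edge is entered exactly once; $\mathrm{h}_G(e)$ denotes the row of $\mathrm{HT}(G)$ containing $e$. An increasing trail is a walk with a specified direction that does not repeat edges (vertices may repeat) and whose consecutive edges are $\le_G$-increasing; its length is its number of edges. $\overline{d}(H)=2|E(H)|/|V(H)|$. Logarithms are base 2. *)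

From Stdlib Require Import Reals.
From mathcomp Require Import all_boot.

Set Implicit Arguments.
Unset Strict Implicit.
Unset Printing Implicit Defensive.

(* An ordered graph on the vertex set 'I_N (vertex order = natural order of 'I_N).
   Edges are 2-element subsets of 'I_N; the edge set is Eset : {set {set 'I_N}}.
   The total edge order is given by a rank w : {set 'I_N} -> nat, injective on Eset:
   e <=_G f  iff  w e <= w f. *)

Section HeightTable.
Variable N : nat.
Variable w : {set 'I_N} -> nat.

Definition ht_cell (i : nat) (st : {set {set 'I_N}} * ({set 'I_N} -> nat)) (v : 'I_N)
  : {set {set 'I_N}} * ({set 'I_N} -> nat) :=
  let: (R, hf) := st in
  match [pick e in R | (v \in e) && [forall f in R, (v \in f) ==> (w f <= w e)]] with
  | Some e => (R :\ e, fun f => if f == e then i else hf f)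
  | None => st
  end.

Definition ht_row (i : nat) st := foldl (ht_cell i) st (enum 'I_N).

Fixpoint ht_rows (i k : nat) st :=
  match k with
  | 0 => st
  | k'.+1 => ht_rows i.+1 k' (ht_row i st)
  end.

(* h_G(e): the row of HT(G) containing e.  #|Eset| rows suffice to enter every edge
   (each row with a remaining edge enters at least one edge); later rows are blank. *)
Definition height (Eset : {set {set 'I_N}}) : {set 'I_N} -> nat :=
  (ht_rows 1 #|Eset| (Eset, fun _ => 0)).2.

(* A trail given by its vertex sequence x0 :: p; its edges in order. *)
Definition trail_edges (x0 : 'I_N) (p : seq 'I_N) : seq {set 'I_N} :=
  pairmap (fun a b => [set a; b]) x0 p.

Definition increasing_trail (Eset : {set {set 'I_N}}) (x0 : 'I_N) (p : seq 'I_N) : bool :=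
  let es := trail_edges x0 p in
  [&& all (fun g => g \in Eset) es, uniq es & sorted (fun a b => w a < w b) es].

End HeightTable.

Definition log2 (x : R) : R := Rdiv (ln x) (ln (IZR 2)).

From Stdlib Require Import Reals Lra.
From mathcomp Require Import all_boot zify boolp.

Set Implicit Arguments.
Unset Strict Implicit.
Unset Printing Implicit Defensive.

(* Pick an integer c with 2h <= c <= 2h + 1 and write k for the height of e.  Let R_m be
   the set of end vertices of increasing trails that start with e, have length at most
   m + 1 and use only edges of height at least k - c m, and E_m the set of last edges of
   such trails of length at most m + 2 and height bound k - c (m + 1).
   If such a trail ends at v with last edge f, then each of the c rows j just below
   k - c m holds an edge at v heavier than f: when the cell (j, v) was processed, f was
   still unentered.  That edge extends the trail, so every vertex of R_m has degree at
   least c in E_m and c |R_m| <= 2 |E_m|.  The vertices covered by E_m lie in R_(m+1);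
   hence if E_m has average degree below h, then |R_(m+1)| > 2 |E_m| / h >= 2 |R_m|.
   As R_m cannot double log n + 1 times inside n vertices, some E_m with m <= log n has
   average degree at least h. *)

Section HeightTable.
Variables (N : nat) (Eset : {set {set 'I_N}}) (w : {set 'I_N} -> nat).
Local Notation state := ({set {set 'I_N}} * ({set 'I_N} -> nat))%type.

(* In a state [(R, hf)], [R] holds the edges not yet entered and [hf] their rows. *)
Definition outweighed_in_row (j : nat) (v : 'I_N) (f : {set 'I_N}) (st : state) : Prop :=
  exists g, [/\ g \in Eset, g \notin st.1, v \in g, st.2 g = j & w f <= w g].

(* The state after processing all cells of rows [< i] and the cells [(i, v)], [v \in s]. *)
Definition ht_invariant (i : nat) (s : seq 'I_N) (st : state) : Prop :=
  [/\ st.1 \subset Eset,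
      forall g, g \in st.1 -> st.2 g = 0,
      forall g, g \in Eset -> g \notin st.1 -> 0 < st.2 g <= i,
      forall f v j, f \in Eset -> v \in f -> 0 < j < i ->
        (f \in st.1) || (j < st.2 f) -> outweighed_in_row j v f st &
      forall f v, f \in Eset -> v \in f -> v \in s -> f \in st.1 ->
        outweighed_in_row i v f st].

Lemma outweighed_in_row_enter j v f R hf g i :
  outweighed_in_row j v f (R, hf) -> g \in R ->
  outweighed_in_row j v f (R :\ g, fun f => if f == g then i else hf f).
Proof.
move=> [g' [g'E g'R vg' hg' wg']] gR; exists g'; split => //=.
- by rewrite in_setD1 (negbTE g'R) andbF.
- by case: eqP g'R => [->|//]; rewrite gR.
Qed.

Lemma ht_invariant_cell i s st v :
  0 < i -> ht_invariant i s st -> ht_invariant i (rcons s v) (ht_cell w i st v).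
Proof.
case: st => R hf i_gt0 [/= RE R0 entered lower current]; rewrite /ht_cell.
case: pickP => [g /andP[gR /andP[vg /forall_inP gmax]] | nomax]; last first.
  split => //= f u fE uf; rewrite mem_rcons in_cons => /orP[/eqP Euv fR|]; last exact: current.
  subst u.
  have [g /andP[gR vg] gmax] := @arg_maxnP _ f [pred g | (g \in R) && (v \in g)] w
    (introT andP (conj fR uf)).
  case/andP: (nomax g); split=> //; apply/andP; split=> //.
  by apply/forall_inP => f' f'R; apply/implyP => vf'; apply: gmax; rewrite /= f'R.
split => /=.
- exact: subset_trans (subD1set _ _) RE.
- by move=> f; rewrite in_setD1 => /andP[/negbTE -> fR]; apply: R0.
- move=> f fE; rewrite in_setD1 negb_and negbK.
  by case: eqP => [_ _|_ /= fR]; [rewrite i_gt0 leqnn | apply: entered].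
- move=> f u j fE uf ji fRj; apply: outweighed_in_row_enter => //; apply: lower => //.
  by move: fRj; rewrite in_setD1; case: eqP => [->|_]; rewrite ?gR.
- move=> f u fE uf; rewrite mem_rcons in_cons in_setD1 => /orP[/eqP Euv|us] /andP[fg fR].
    subst u; exists g; split; rewrite /= ?in_setD1 ?eqxx //; first exact: (subsetP RE).
    by apply: (implyP (gmax f fR)).
  by apply: outweighed_in_row_enter => //; apply: current.
Qed.

Lemma ht_invariant_row i st :
  0 < i -> ht_invariant i [::] st -> ht_invariant i.+1 [::] (ht_row w i st).
Proof.
move=> i_gt0 inv0.
have : ht_invariant i (enum 'I_N) (ht_row w i st).
  rewrite /ht_row; elim/last_ind: (enum 'I_N) => [//|s v IH].
  by rewrite foldl_rcons; apply: ht_invariant_cell.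
case: (ht_row w i st) => R hf [/= RE R0 entered lower current]; split => //=.
- by move=> g gE gR; case/andP: (entered g gE gR) => -> /leqW.
- move=> f v j fE vf /andP[j_gt0]; rewrite ltnS leq_eqVlt => /orP[/eqP->|ji] fRj.
    apply: current; rewrite ?mem_enum //; apply: contraT => fR.
    by move: fRj; rewrite (negbTE fR) ltnNge; case/andP: (entered f fE fR) => _ ->.
  by apply: lower; rewrite ?j_gt0.
Qed.

Lemma ht_invariant_rows k i st :
  0 < i -> ht_invariant i [::] st -> ht_invariant (i + k) [::] (ht_rows w i k st).
Proof.
elim: k i st => [|k IH] i st i_gt0 inv; first by rewrite addn0.
by rewrite addnS -addSn; apply: IH => //; apply: ht_invariant_row.
Qed.

Lemma ht_invariant_init : ht_invariant 1 [::] (Eset, fun=> 0).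
Proof.
split => //= [g ->//|f v j _ _ /andP[j_gt0 j_lt1]].
by move: (leq_trans j_gt0 j_lt1).
Qed.

Lemma heavier_edge_in_lower_row f v j :
  f \in Eset -> v \in f -> 0 < j < height w Eset f ->
  exists g, [/\ g \in Eset, v \in g, height w Eset g = j & w f <= w g].
Proof.
move=> fE vf /andP[j_gt0 j_lt]; move: j_lt.
have := ht_invariant_rows #|Eset| (ltn0Sn 0) ht_invariant_init.
rewrite /height; case: ht_rows => R hf [/= _ R0 entered lower _] j_lt.
have fR : f \notin R by apply: contraTN j_lt => /R0->.
have [|g [gE _ vg <- wg]] := lower f v j fE vf _ (introT orP (or_intror j_lt)).
  by rewrite j_gt0; case/andP: (entered f fE fR) => _; apply: leq_trans.
by exists g.
Qed.

End HeightTable.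

Lemma trail_edges_rcons N (x0 : 'I_N) p u :
  trail_edges x0 (rcons p u) = rcons (trail_edges x0 p) [set last x0 p; u].
Proof. by elim: p x0 => [|y p IH] x0 //=; rewrite IH. Qed.

Lemma last_in_last_trail_edge N (x0 : 'I_N) p :
  p != [::] -> last x0 p \in last set0 (trail_edges x0 p).
Proof. by case/lastP: p => // p u _; rewrite trail_edges_rcons !last_rcons !inE eqxx orbT. Qed.

Lemma mem_last_trail_edge N (x0 : 'I_N) p :
  p != [::] -> last set0 (trail_edges x0 p) \in trail_edges x0 p.
Proof. by case/lastP: p => // p u _; rewrite trail_edges_rcons last_rcons mem_rcons mem_head. Qed.

Lemma increasing_trail_sorted N (w : {set 'I_N} -> nat) (Eset : {set {set 'I_N}}) x0 p :
  all [in Eset] (trail_edges x0 p) -> sorted (fun a b => w a < w b) (trail_edges x0 p) ->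
  increasing_trail w Eset x0 p.
Proof.
move=> allE srt; rewrite /increasing_trail allE srt andbT /=.
by apply: sorted_uniq srt => [b a c|a]; [apply: ltn_trans | apply: ltnn].
Qed.

Lemma cards2_set2 (T : finType) (g : {set T}) v :
  #|g| = 2 -> v \in g -> exists u, g = [set v; u].
Proof.
move/eqP/cards2P => [x [y [_ ->]]]; rewrite !inE => /orP[/eqP->|/eqP->]; first by exists y.
by exists x; rewrite setUC.
Qed.

Lemma sum_degree_le (T : finType) (A : {pred T}) (E : {set {set T}}) :
  (forall g, g \in E -> #|g| = 2) ->
  \sum_(v in A) #|[set g in E | v \in g]| <= 2 * #|E|.
Proof.
move=> E2; have deg v : #|[set g in E | v \in g]| = \sum_(g in E) (v \in g).
  by rewrite -sum1dep_card big_mkcondr.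
apply: (@leq_trans (\sum_v #|[set g in E | v \in g]|)).
  by rewrite [leqRHS](bigID [in A]) leq_addr.
rewrite (eq_bigr _ (fun v _ => deg v)) exchange_big mulnC -sum_nat_const.
apply: eq_leq; apply: eq_bigr => g gE.
by rewrite -[RHS](E2 g gE) -sum1_card [RHS]big_mkcond.
Qed.

Lemma exists_before_doubling (r : nat -> nat) (P : nat -> Prop) M :
  0 < r 0 -> (forall m, m < M -> 0 < r m -> ~ P m -> 2 * r m <= r m.+1) ->
  r M < 2 ^ M -> exists2 m, m < M & P m.
Proof.
move=> r0_gt0 double rM; apply: contrapT => noP.
suff /(_ M (leqnn M)) : forall m, m <= M -> 2 ^ m <= r m by rewrite leqNgt rM.
elim=> [_|m IH mM]; first by rewrite expn0.
have rm : 2 ^ m <= r m by apply: IH; apply: ltnW.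
rewrite expnS; apply: leq_trans (double m mM _ _); first by rewrite leq_mul2l rm orbT.
  by apply: leq_trans rm; rewrite expn_gt0.
by move=> Pm; apply: noP; exists m.
Qed.

Definition average_degree_ge (T : finType) (h : R) (E : {set {set T}}) : Prop :=
  \bigcup_(g in E) g != set0 /\ Rge (Rdiv (INR (2 * #|E|)) (INR #|\bigcup_(g in E) g|)) h.

Section TrailsFromE.
Variables (N : nat) (Eset : {set {set 'I_N}}) (w : {set 'I_N} -> nat) (e : {set 'I_N}).
Hypotheses (edges2 : forall f, f \in Eset -> #|f| = 2) (w_inj : {in Eset &, injective w})
  (eE : e \in Eset).
Local Notation ht := (height w Eset).
Local Notation te := (@trail_edges N).

Definition etrail (M T : nat) (x0 : 'I_N) (p : seq 'I_N) : bool :=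
  [&& increasing_trail w Eset x0 p, p != [::], head set0 (te x0 p) == e,
      size p <= M & all (fun g => T <= ht g) (te x0 p)].

Definition etrail_ends M T : {set 'I_N} :=
  [set v | `[< exists x0 p, etrail M T x0 p /\ last x0 p = v >]].

Definition etrail_last_edges M T : {set {set 'I_N}} :=
  [set g | `[< exists x0 p, etrail M T x0 p /\ last set0 (te x0 p) = g >]].

Lemma etrail_rcons M T T' x0 p g :
  etrail M T x0 p -> g \in Eset -> last x0 p \in g -> w (last set0 (te x0 p)) < w g ->
  T' <= T -> T' <= ht g ->
  exists u, etrail M.+1 T' x0 (rcons p u) /\ last set0 (te x0 (rcons p u)) = g.
Proof.
move=> /and5P[/and3P[allE _ srt] p_nil hd sz highT] gE vg wg T'T T'g.
have [u def_g] := cards2_set2 (edges2 gE) vg.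
exists u; rewrite trail_edges_rcons last_rcons -def_g; split => //.
apply/and5P; split.
- apply: increasing_trail_sorted; rewrite trail_edges_rcons -def_g ?all_rcons ?gE //.
  by case: (te x0 p) srt wg => //= a s; rewrite rcons_path => -> ->.
- by rewrite -size_eq0 size_rcons.
- by rewrite trail_edges_rcons; case: p p_nil hd {sz highT srt allE wg vg def_g}.
- by rewrite size_rcons.
- rewrite trail_edges_rcons -def_g all_rcons T'g.
  by apply: sub_all highT => f; apply: leq_trans.
Qed.

Lemma etrail_belast M T x0 p u :
  etrail M T x0 (rcons p u) -> p != [::] -> etrail M T x0 p.
Proof.
rewrite /etrail /increasing_trail trail_edges_rcons !all_rcons size_rcons.
move=> /and5P[/and3P[/andP[_ allE] _ srt] _ hd sz /andP[_ highT]] p_nil.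
apply/and5P; split => //.
- apply: increasing_trail_sorted => //.
  by case: (te x0 p) srt => //= a s; rewrite rcons_path => /andP[].
- by case: p p_nil hd {allE srt sz highT}.
- exact: ltnW.
Qed.

Lemma etrail_last_edge M T x0 p : etrail M T x0 p -> last set0 (te x0 p) \in Eset.
Proof. by case/and5P => /and3P[/allP allE _ _] /mem_last_trail_edge/allE. Qed.

Lemma etrail_edge_end M T x0 p v :
  etrail M T x0 p -> T <= ht e -> v \in last set0 (te x0 p) ->
  exists x1 p1, etrail M T x1 p1 /\ last x1 p1 = v.
Proof.
case/lastP: p => [|p u tr Te]; first by case/and5P.
rewrite trail_edges_rcons last_rcons !inE => /orP[/eqP->|/eqP->]; last first.
  by exists x0, (rcons p u); rewrite last_rcons.
have [/eqP p_nil|p_nil] := boolP (p == [::]); last first.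
  by exists x0, p; split => //; apply: etrail_belast tr p_nil.
subst p; exists u, [:: x0]; split => //.
case/and5P: tr => _ _ /= /eqP def_e sz _.
by rewrite /etrail /increasing_trail /= setUC def_e eE Te sz eqxx.
Qed.

Lemma etrail_last_edges_sub M T : etrail_last_edges M T \subset Eset.
Proof.
by apply/subsetP => g; rewrite inE => /asboolP[x0 [p [tr <-]]]; apply: etrail_last_edge tr.
Qed.

Lemma cover_etrail_last_edges M T :
  T <= ht e -> \bigcup_(g in etrail_last_edges M T) g \subset etrail_ends M T.
Proof.
move=> Te; apply/subsetP => v /bigcupP[g]; rewrite inE => /asboolP[x0 [p [tr <-]]] vg.
have [x1 [p1 end_v]] := etrail_edge_end tr Te vg.
by rewrite inE; apply/asboolP; exists x1, p1.
Qed.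

Lemma etrail_ends1 T : T <= ht e -> 0 < #|etrail_ends 1 T|.
Proof.
move=> Te; have /cards2P[x0 [x1 [_ def_e]]] : #|e| == 2 by rewrite edges2.
rewrite card_gt0; apply/set0Pn; exists x1; rewrite inE; apply/asboolP.
exists x0, [:: x1]; split => //.
by rewrite /etrail /increasing_trail /= -def_e eE Te eqxx.
Qed.

Lemma etrail_extend_in_row M T T' x0 p j :
  etrail M T x0 p -> 0 < j -> T' <= j < T ->
  exists g, [/\ g \in etrail_last_edges M.+1 T', last x0 p \in g & ht g = j].
Proof.
move=> tr j_gt0 /andP[T'j jT].
set f := last set0 (te x0 p).
have fE : f \in Eset := etrail_last_edge tr.
have vf : last x0 p \in f by apply: last_in_last_trail_edge; case/and5P: tr.
have Tf : T <= ht f.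
  by case/and5P: tr => _ /mem_last_trail_edge f_in _ _ /allP/(_ _ (f_in x0)).
have j_row : 0 < j < ht f by rewrite j_gt0 (leq_trans jT Tf).
have [g [gE vg hg wfg]] := heavier_edge_in_lower_row fE vf j_row.
have wfg' : w f < w g.
  rewrite ltn_neqAle wfg andbT; apply: contraTneq jT => /(w_inj fE gE) fg.
  by rewrite -leqNgt -hg -fg.
have T'g : T' <= ht g by rewrite hg.
have [u [tr' last_g]] := etrail_rcons tr gE vg wfg' (leq_trans T'j (ltnW jT)) T'g.
by exists g; split => //; rewrite inE; apply/asboolP; exists x0, (rcons p u).
Qed.

Lemma etrail_ends_degree M T T' c v :
  v \in etrail_ends M T -> 0 < T' -> T' + c <= T ->
  c <= #|[set g in etrail_last_edges M.+1 T' | v \in g]|.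
Proof.
rewrite inE => /asboolP[x0 [p [tr <-]]] T'_gt0 T'cT.
have row_edge (j : 'I_c) : exists g,
    (g \in [set g in etrail_last_edges M.+1 T' | last x0 p \in g]) && (ht g == T' + j).
  have j_range : T' <= T' + j < T.
    by rewrite leq_addr /=; apply: leq_trans T'cT; rewrite ltn_add2l.
  have [g [gE vg hg]] := etrail_extend_in_row tr (leq_trans T'_gt0 (leq_addr j T')) j_range.
  by exists g; rewrite in_set gE vg hg eqxx.
have [F HF] := fin_all_exists row_edge.
have F_inj : injective F.
  move=> j1 j2 F12; apply: val_inj; apply/eqP; rewrite -(eqn_add2l T').
  by case/andP: (HF j1) => _ /eqP <-; case/andP: (HF j2) => _ /eqP <-; rewrite F12.
rewrite -[c in c <= _]card_ord -(card_imset _ F_inj); apply: subset_leq_card.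
by apply/subsetP => g /imsetP[j _ ->]; case/andP: (HF j).
Qed.

Lemma etrail_ends_card M T T' c :
  0 < T' -> T' + c <= T -> c * #|etrail_ends M T| <= 2 * #|etrail_last_edges M.+1 T'|.
Proof.
move=> T'_gt0 T'cT; apply: leq_trans (sum_degree_le (etrail_ends M T) _); last first.
  by move=> g /(subsetP (etrail_last_edges_sub _ _)) /edges2.
rewrite mulnC -sum_nat_const; apply: leq_sum => v v_end.
exact: etrail_ends_degree v_end T'_gt0 T'cT.
Qed.

Local Open Scope R_scope.

Lemma etrail_ends_double (h : R) c M T :
  0 < h -> 2 * h <= INR c -> (c < T)%N -> (T <= ht e)%N -> (0 < #|etrail_ends M T|)%N ->
  ~ average_degree_ge h (etrail_last_edges M.+1 (T - c)) ->
  (2 * #|etrail_ends M T| <= #|etrail_ends M.+1 (T - c)|)%N.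
Proof.
move=> h_gt0 hc cT Te ends_gt0 sparse.
set A := etrail_ends M T; set E := etrail_last_edges M.+1 (T - c).
set V := \bigcup_(g in E) g.
have cAE : (c * #|A| <= 2 * #|E|)%N by apply: etrail_ends_card; lia.
have VA : (#|V| <= #|etrail_ends M.+1 (T - c)|)%N.
  by apply/subset_leq_card/cover_etrail_last_edges; lia.
have c_gt0 : (0 < c)%N by apply/ltP/INR_lt; rewrite /=; lra.
have /set0Pn[g gE] : E != set0.
  rewrite -card_gt0 -(ltn_pmul2l (ltn0Sn 1)) muln0; apply: leq_trans cAE.
  by rewrite muln_gt0 c_gt0.
have /set0Pn[x xg] : g != set0.
  by rewrite -card_gt0 edges2 //; apply: (subsetP (etrail_last_edges_sub _ _) _ gE).
have V_gt0 : 0 < INR #|V|.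
  by apply/lt_0_INR/ltP; rewrite card_gt0; apply/set0Pn; exists x; apply/bigcupP; exists g.
have E_sparse : INR (2 * #|E|) < h * INR #|V|.
  apply: Rnot_le_lt => E_dense; apply: sparse; split.
    by rewrite -card_gt0; apply/ltP/INR_lt.
  apply/Rle_ge/(Rmult_le_reg_r _ _ _ V_gt0).
  by rewrite /Rdiv Rmult_assoc Rinv_l ?Rmult_1_r //; apply: Rgt_not_eq.
have cAE' : INR c * INR #|A| <= INR (2 * #|E|) by rewrite -mult_INR; apply/le_INR/leP.
have hAE := Rmult_le_compat_r _ _ _ (pos_INR #|A|) hc.
have hAV : h * (2 * INR #|A|) < h * INR #|V| by lra.
have AV : (2 * #|A| < #|V|)%N.
  by apply/ltP/INR_lt; rewrite mult_INR; apply: (Rmult_lt_reg_l _ _ _ h_gt0).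
exact: leq_trans (ltnW AV) VA.
Qed.

Lemma exists_dense_etrail_last_edges (h : R) c K :
  0 < h -> 2 * h <= INR c -> (c * K.+1 < ht e)%N -> (N < 2 ^ K.+1)%N ->
  exists2 m, (m <= K)%N & average_degree_ge h (etrail_last_edges m.+2 (ht e - c * m.+1)).
Proof.
move=> h_gt0 hc cK NK.
apply: (@exists_before_doubling (fun m => #|etrail_ends m.+1 (ht e - c * m)|)
  (fun m => average_degree_ge h (etrail_last_edges m.+2 (ht e - c * m.+1))) K.+1).
- by rewrite muln0 subn0; apply: etrail_ends1.
- move=> m mK ends_gt0 sparse.
  have cm : (c * m.+1 <= c * K.+1)%N by rewrite leq_mul2l mK orbT.
  have shift : (ht e - c * m.+1 = ht e - c * m - c)%N by rewrite mulnS addnC subnDA.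
  rewrite shift in sparse *; apply: (etrail_ends_double h_gt0 hc) => //.
    by rewrite mulnS in cm; lia.
  exact: leq_subr.
- by apply: leq_ltn_trans NK; rewrite -[leqRHS]card_ord max_card.
Qed.

End TrailsFromE.

Local Open Scope R_scope.

Lemma INR_expn2 m : INR (2 ^ m) = 2 ^ m.
Proof. by elim: m => [|m IH] //=; rewrite expnS mult_INR IH /=; ring. Qed.

Lemma le_log2 m n : (2 ^ m <= n)%N -> INR m <= log2 (INR n).
Proof.
move=> mn; have ln2_gt0 : 0 < ln 2 by have := ln_lt_2; lra.
have n_gt0 : 0 < INR n by apply/lt_0_INR/ltP; apply: leq_trans mn; rewrite expn_gt0.
apply: Rnot_lt_le => lt_m; apply: (Rle_not_lt _ _ (le_INR _ _ (elimT leP mn))).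
rewrite INR_expn2; apply: ln_lt_inv => //; first by apply: pow_lt; lra.
rewrite ln_pow; last lra.
have := Rmult_lt_compat_r _ _ _ ln2_gt0 lt_m.
by rewrite /log2 /Rdiv Rmult_assoc Rinv_l ?Rmult_1_r //; apply: Rgt_not_eq.
Qed.

Lemma exists_nat_between (x : R) : 0 <= x -> exists c : nat, x <= INR c <= x + 1.
Proof.
move=> x_ge0; have [up_gt up_le] := archimed x.
have up_ge0 : (0 <= up x)%Z by apply: le_IZR; lra.
by exists (Z.to_nat (up x)); rewrite INR_IZR_INZ Znat.Z2Nat.id //; lra.
Qed.

Theorem lemma4p2 (N n : nat) (Eset : {set {set 'I_N}}) (w : {set 'I_N} -> nat)
  (h : R) (e : {set 'I_N}) :
  (forall f, f \in Eset -> #|f| = 2%N) ->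
  {in Eset &, injective w} ->
  (N <= n)%N ->
  1 <= h ->
  e \in Eset ->
  INR (height w Eset e) >= 21 * h * log2 (INR n) ->
  exists (VH : {set 'I_N}) (EH : {set {set 'I_N}}),
    [/\ EH \subset Eset,
        (forall f, f \in EH -> f \subset VH),
        VH != set0,
        INR (2 * #|EH|)%N / INR #|VH| >= h &
        forall f, f \in EH ->
          exists (x0 : 'I_N) (p : seq 'I_N),
            [/\ increasing_trail w Eset x0 p && (p != [::]),
                head set0 (trail_edges x0 p) = e,
                last set0 (trail_edges x0 p) = f,
                INR (size p) <= 2 + log2 (INR n) &
                forall g, g \in trail_edges x0 p ->
                  INR (height w Eset g) >= INR (height w Eset e) - 7 * h * (log2 (INR n) + 2)]].
Proof.
move=> edges2 w_inj Nn h_ge1 eE ht_e.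
set k := height w Eset e in ht_e *; set L := log2 (INR n) in ht_e *.
have N2 : (2 <= N)%N by rewrite -(edges2 e eE) -[X in (_ <= X)%N]card_ord max_card.
pose K := trunc_log 2 n.
have KL : INR K <= L by apply/le_log2/trunc_logP; lia.
have L_ge1 : 1 <= L by apply: (le_log2 (m := 1)); lia.
have [c [hc ch]] := @exists_nat_between (2 * h) ltac:(lra).
have cmK m : (m <= K)%N -> INR (c * m.+1) <= 3 * h * (L + 1).
  move=> mK; have := le_INR _ _ (elimT leP mK); rewrite mult_INR S_INR; nra.
have cK : (c * K.+1 < k)%N by apply/ltP/INR_lt; have := cmK K (leqnn K); nra.
have NK : (N < 2 ^ K.+1)%N by apply: leq_ltn_trans Nn (trunc_log_ltn _ _); lia.
have h_gt0 : 0 < h by lra.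
have [m mK [VH_nz dense]] := exists_dense_etrail_last_edges edges2 w_inj eE h_gt0 hc cK NK.
pose E := etrail_last_edges Eset w e m.+2 (k - c * m.+1).
exists (\bigcup_(g in E) g), E; split; [exact: etrail_last_edges_sub | | by [] | by [] |].
  by move=> f fE; apply: bigcup_sup fE.
move=> f; rewrite inE => /asboolP[x0 [p [/and5P[tr p_nil /eqP hd sz high] <-]]].
exists x0, p; split => //; first by rewrite tr.
- have := le_INR _ _ (elimT leP sz); have := le_INR _ _ (elimT leP mK); rewrite !S_INR; lra.
- move=> g /(allP high)/leP/le_INR; rewrite minus_INR; last first.
    by apply/leP/ltnW/(leq_ltn_trans _ cK); rewrite leq_mul2l ltnS mK orbT.
  have := cmK m mK; nra.
Qed.
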